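(* Let $f,g$ be smooth functions on an interval $I\subset\mathbb{R}$ with $\dot f^2+\dot g^2=1$ and $f$ nowhere zero, let $l=l(v)$, $v\in J$, be an arc-length parametrized curve $c$ on the unit sphere $S^2(1)\subset\mathbb{R}^3=\mathrm{span}\{e_1,e_2,e_3\}$ with spherical curvature $\kappa(v)$, and let $M^2: z(u,v)=f(u)\,l(v)+g(u)\,e_4$ (a meridian surface). Assume $M^2$ belongs to the general class, i.e. $\kappa_m(u)\kappa(v)\neq0$, where $\kappa_m=\dot f\ddot g-\dot g\ddot f$. Let $a\neq0$ be a constant. Then the invariant $k$ of $M^2$ is constant equal to $-a^2$ if and only if the curve $c$ is a circle on $S^2(1)$ with constant spherical curvature $\kappa\equiv b$ for some constant $b\neq0$, and $f$ satisfies the differential equation $$\ddot f(u)=\mp\frac{a}{b}\,f(u)\sqrt{1-\dot f^2(u)}.$$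
   Context: $\{e_1,e_2,e_3,e_4\}$ is the standard orthonormal basis of $\mathbb{R}^4$. For the arc-length curve $l(v)$ on $S^2(1)$ set $t=l'$ and let $n$ be the unit vector with $\{t,n,l\}$ orthonormal; the spherical curvature $\kappa$ is defined by $l'=t$, $t'=\kappa n-l$, $n'=-\kappa t$. $\kappa_m$ is the curvature of the meridian $u\mapsto(f(u),g(u))$. The invariant $k$ of a surface $z(u,v)$ in $\mathbb{R}^4$ is defined as follows: with $E,F,G$ the first fundamental form coefficients, $W=\sqrt{EG-F^2}$, an orthonormal normal frame $\{e'_1,e'_2\}$ with $\{z_u,z_v,e'_1,e'_2\}$ positively oriented, and second fundamental form $\sigma(z_u,z_u)=c_{11}^1e'_1+c_{11}^2e'_2$, $\sigma(z_u,z_v)=c_{12}^1e'_1+c_{12}^2e'_2$, $\sigma(z_v,z_v)=c_{22}^1e'_1+c_{22}^2e'_2$, put $L=\frac{2}{W}(c_{11}^1c_{12}^2-c_{12}^1c_{11}^2)$, $M=\frac1W(c_{11}^1c_{22}^2-c_{22}^1c_{11}^2)$, $N=\frac2W(c_{12}^1c_{22}^2-c_{22}^1c_{12}^2)$ and $k=\frac{LN-M^2}{EG-F^2}$. (For the meridian surface this gives $k=-\kappa_m^2(u)\kappa^2(v)/f^2(u)$.) *)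

From HB Require Import structures.
From mathcomp Require Import all_boot all_order all_algebra.
From mathcomp Require Import all_classical all_reals all_analysis.
Set Implicit Arguments. Unset Strict Implicit. Unset Printing Implicit Defensive.
Import Order.TTheory GRing.Theory Num.Theory.
Import numFieldNormedType.Exports.
Local Open Scope ring_scope.
Local Open Scope classical_set_scope.

Section Defs.
Variable R : realType.

Definition open_interval (I : set R) : Prop :=
  (exists x, I x) /\ open I /\
  (forall x y w, I x -> I w -> x <= y -> y <= w -> I y).

Definition smooth_on (I : set R) (h : R -> R) : Prop :=
  forall (n : nat) (x : R), I x -> derivable (derive1n n h) x 1.

(* standard basis vector e_(i+1) of R^4 *)
Definition ebasis (i : 'I_4) : 'rV[R]_4 := delta_mx 0 i.

Definition dot4 (x y : 'rV[R]_4) : R := \sum_(i < 4) x 0 i * y 0 i.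

Definition vder (h : R -> 'rV[R]_4) (t : R) : 'rV[R]_4 :=
  \row_(i < 4) derive1 (fun s => h s 0 i) t.

Definition vsmooth_on (J : set R) (h : R -> 'rV[R]_4) : Prop :=
  forall i : 'I_4, smooth_on J (fun s => h s 0 i).

Definition pu (z : R -> R -> 'rV[R]_4) (u v : R) : 'rV[R]_4 :=
  vder (fun s => z s v) u.
Definition pv (z : R -> R -> 'rV[R]_4) (u v : R) : 'rV[R]_4 :=
  vder (fun s => z u s) v.

Definition det4 (a b c d : 'rV[R]_4) : R :=
  \det (\matrix_(i < 4, j < 4) (nth 0 [:: a; b; c; d] i) 0 j).

Definition oriented_normal_frame (z : R -> R -> 'rV[R]_4)
  (n1 n2 : R -> R -> 'rV[R]_4) (u v : R) : Prop :=
  dot4 (n1 u v) (n1 u v) = 1 /\ dot4 (n2 u v) (n2 u v) = 1 /\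
  dot4 (n1 u v) (n2 u v) = 0 /\
  dot4 (n1 u v) (pu z u v) = 0 /\ dot4 (n1 u v) (pv z u v) = 0 /\
  dot4 (n2 u v) (pu z u v) = 0 /\ dot4 (n2 u v) (pv z u v) = 0 /\
  0 < det4 (pu z u v) (pv z u v) (n1 u v) (n2 u v).

Definition k_inv (z : R -> R -> 'rV[R]_4) (n1 n2 : R -> R -> 'rV[R]_4)
  (u v : R) : R :=
  let zu := pu z u v in
  let zv := pv z u v in
  let E := dot4 zu zu in
  let F := dot4 zu zv in
  let G := dot4 zv zv in
  let W := Num.sqrt (E * G - F ^+ 2) in
  (* sigma(z_u,z_u), sigma(z_u,z_v), sigma(z_v,z_v): normal parts of
     z_uu, z_uv, z_vv; their coordinates in the frame {n1, n2} *)
  let zuu := pu (pu z) u v in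
  let zuv := pv (pu z) u v in
  let zvv := pv (pv z) u v in
  let c111 := dot4 zuu (n1 u v) in
  let c112 := dot4 zuu (n2 u v) in
  let c121 := dot4 zuv (n1 u v) in
  let c122 := dot4 zuv (n2 u v) in
  let c221 := dot4 zvv (n1 u v) in
  let c222 := dot4 zvv (n2 u v) in
  let L := 2 / W * (c111 * c122 - c121 * c112) in
  let M := 1 / W * (c111 * c222 - c221 * c112) in
  let N := 2 / W * (c121 * c222 - c221 * c122) in
  (L * N - M ^+ 2) / (E * G - F ^+ 2).

Definition kappa_m (f g : R -> R) (u : R) : R :=
  derive1 f u * derive1 (derive1 g) u - derive1 g u * derive1 (derive1 f) u.

Definition meridian_surface (f g : R -> R) (l : R -> 'rV[R]_4) : R -> R -> 'rV[R]_4 :=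
  fun u v => f u *: l v + g u *: ebasis 3.

End Defs.

(* With respect to the orthonormal frame {l, t, n, e4} along the curve, the
   meridian surface has E = 1, F = 0, G = f^2 and sigma(z_u, z_v) = 0, and every
   oriented orthonormal normal frame is a rotation of {-g' l + f' e4, n}; hence
   k = - kappa_m^2 kappa^2 / f^2.  So k = -a^2 means kappa_m^2 kappa^2 = a^2 f^2:
   then kappa^2 is constant, and kappa, continuous and nowhere zero on the
   interval J, is a constant b; and since f'' = - kappa_m g' with
   g'^2 = 1 - f'^2, the relation is f''^2 = (a/b)^2 f^2 (1 - f'^2).  Conversely
   the differential equation gives (kappa_m^2 - (a/b)^2 f^2) g'^2 = 0; at a point
   where the first factor does not vanish, g' vanishes on a neighbourhood, so
   g'' = 0 there too and kappa_m = f' g'' - g' f'' = 0, which is excluded. *)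

From HB Require Import structures.
From mathcomp Require Import all_boot all_order all_algebra.
From mathcomp Require Import all_classical all_reals all_analysis.
From mathcomp Require Import ring lra.
Import Order.TTheory GRing.Theory Num.Theory.
Import numFieldNormedType.Exports.
Local Open Scope ring_scope.
Local Open Scope classical_set_scope.

Section RingIdentities.
Context {K : comNzRingType}.
Implicit Types a b x y : K.

Lemma orthogonal_to_unit {a b p q : K} : a ^+ 2 + b ^+ 2 = 1 -> a * p + b * q = 0 ->
  exists s, p = - b * s /\ q = a * s.
Proof.
move=> unit orth; exists (a * q - b * p); split.
- transitivity (p * (a ^+ 2 + b ^+ 2) - a * (a * p + b * q)); last by ring.
  by rewrite unit orth; ring.
- transitivity (q * (a ^+ 2 + b ^+ 2) - b * (a * p + b * q)); last by ring.
  by rewrite unit orth; ring.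
Qed.

Lemma unit_rotation_sqr a b x y : a ^+ 2 + b ^+ 2 = 1 ->
  (- b * x) * (- b * y) + (a * x) * (a * y) = x * y.
Proof. by move=> unit; rewrite -[RHS]mul1r -unit; ring. Qed.

Lemma curvature_mul_velocity {a b a' b' : K} : a ^+ 2 + b ^+ 2 = 1 -> a * a' + b * b' = 0 ->
  (a * b' - b * a') * b = - a'.
Proof.
move=> unit orth; apply/eqP; rewrite -subr_eq0 opprK; apply/eqP.
transitivity (a * (a * a' + b * b') - a' * (a ^+ 2 + b ^+ 2) + a'); first by ring.
by rewrite unit orth; ring.
Qed.

(* [p_i], [q_i], [r_i] are the [l]-, [e4]- and [n]-coordinates of the i-th unit
   normal; the left side is [(c11^1 c22^2 - c22^1 c11^2)^2]. *)
Lemma meridian_normal_det_sqr {fp gp fpp gpp f k p1 q1 r1 p2 q2 r2 : K} :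
  fp ^+ 2 + gp ^+ 2 = 1 -> fp * p1 + gp * q1 = 0 -> fp * p2 + gp * q2 = 0 ->
  p1 * p1 + q1 * q1 + r1 * r1 = 1 -> p2 * p2 + q2 * q2 + r2 * r2 = 1 ->
  p1 * p2 + q1 * q2 + r1 * r2 = 0 ->
  ((fpp * p1 + gpp * q1) * (f * (k * r2 - p2))
     - (f * (k * r1 - p1)) * (fpp * p2 + gpp * q2)) ^+ 2
  = f ^+ 2 * k ^+ 2 * (fp * gpp - gp * fpp) ^+ 2.
Proof.
move=> unit /(orthogonal_to_unit unit)[s1 [-> ->]] /(orthogonal_to_unit unit)[s2 [-> ->]].
rewrite !unit_rotation_sqr // => n1 n2 n12.
have det_sqr : (s1 * r2 - r1 * s2) ^+ 2 = 1.
  transitivity ((s1 * s1 + r1 * r1) * (s2 * s2 + r2 * r2) - (s1 * s2 + r1 * r2) ^+ 2).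
    by ring.
  by rewrite n1 n2 n12; ring.
transitivity (f ^+ 2 * k ^+ 2 * (fp * gpp - gp * fpp) ^+ 2 * (s1 * r2 - r1 * s2) ^+ 2).
  by ring.
by rewrite det_sqr mulr1.
Qed.

End RingIdentities.

Section RealFunctions.
Context {R : realType}.
Implicit Types (h : R -> R) (A J : set R) (x c : R).

Lemma derive1_near_cst h x c : (\forall s \near x, h s = c) -> derive1 h x = 0.
Proof. by move=> hc; rewrite derive1E (@near_eq_derive _ _ _ h (cst c) x 1 hc) derive_cst. Qed.

Lemma derive1_near_eq h1 h2 x : (\forall s \near x, h1 s = h2 s) ->
  derive1 h1 x = derive1 h2 x.
Proof. by move=> e12; rewrite !derive1E (@near_eq_derive _ _ _ h1 h2 x 1 e12). Qed.

Lemma derive1_cst_on {h A x c} : open A -> A x -> (forall s, A s -> h s = c) ->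
  derive1 h x = 0.
Proof. by move=> oA Ax hc; apply: (@derive1_near_cst _ _ c); apply: filterS (oA x Ax). Qed.

Lemma derive1_lincomb (h1 h2 : R -> R) x c d :
  derivable h1 x 1 -> derivable h2 x 1 ->
  derive1 (fun s => h1 s * c + h2 s * d) x = derive1 h1 x * c + derive1 h2 x * d.
Proof.
move=> d1 d2; rewrite -(derive1Mr c d1) -(derive1Mr d d2) !derive1E.
exact: deriveD (derivableM d1 (derivable_cst c x 1)) (derivableM d2 (derivable_cst d x 1)).
Qed.

Lemma derive1_affine h x c d : derivable h x 1 ->
  derive1 (fun s => c * h s + d) x = c * derive1 h x.
Proof.
move=> dh; rewrite -(derive1Ml c dh) !derive1E.
rewrite (@deriveD _ _ _ (fun s => c * h s) (cst d) x 1
  (derivableM (derivable_cst c x 1) dh) (derivable_cst d x 1)).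
by rewrite derive_cst addr0.
Qed.

Lemma derive1_sqr_sum {h1 h2 : R -> R} {x} : derivable h1 x 1 -> derivable h2 x 1 ->
  derive1 (fun s => h1 s ^+ 2 + h2 s ^+ 2) x =
  2 * (h1 x * derive1 h1 x + h2 x * derive1 h2 x).
Proof.
move=> d1 d2.
have -> : (fun s => h1 s ^+ 2 + h2 s ^+ 2) = (fun s => h1 s * h1 s + h2 s * h2 s).
  by apply/funext => s; rewrite !expr2.
rewrite derive1E (deriveD (derivableM d1 d1) (derivableM d2 d2)).
by rewrite (deriveM d1 d1) (deriveM d2 d2) -!derive1E /GRing.scale /=; ring.
Qed.

Lemma derivable_nonvanishing_mul_gt0 J h :
  (forall x y w, J x -> J w -> x <= y -> y <= w -> J y) ->
  (forall x, J x -> derivable h x 1) -> (forall x, J x -> h x != 0) ->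
  forall x y, J x -> J y -> 0 < h x * h y.
Proof.
move=> convJ dh h0.
suff sign_le x y : J x -> J y -> x <= y -> 0 < h x * h y.
  move=> x y Jx Jy; have [xy|/ltW yx] := leP x y; first exact: sign_le.
  by rewrite mulrC; exact: sign_le.
move=> Jx Jy xy; rewrite ltNge; apply/negP => hxy.
have Jxy c : c \in `[x, y]%R -> J c by rewrite in_itv /= => /andP[]; exact: convJ.
have [c /Jxy Jc hc0] : exists2 c, c \in `[x, y]%R & h c = 0.
  apply: IVT xy _ _; first by apply: derivable_within_continuous => c /Jxy; exact: dh.
  have /orP[hx|hx] : (h x < 0) || (0 < h x) by rewrite -neq_lt h0.
    have hy : 0 <= h y by nra.
    by rewrite ge_min le_max (ltW hx) hy orbT.
  have hy : h y <= 0 by nra.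
  by rewrite ge_min le_max (ltW hx) hy orbT.
by move: (h0 c Jc); rewrite hc0 eqxx.
Qed.

Lemma derivable_nonvanishing_eq_of_sqr_eq {J h x y} :
  (forall x y w, J x -> J w -> x <= y -> y <= w -> J y) ->
  (forall x, J x -> derivable h x 1) -> (forall x, J x -> h x != 0) ->
  J x -> J y -> h x ^+ 2 = h y ^+ 2 -> h x = h y.
Proof.
move=> convJ dh h0 Jx Jy /eqP; rewrite eqf_sqr => /orP[/eqP //|/eqP hxy].
have /negP[] : ~~ (0 < h x * h y) by rewrite hxy mulNr oppr_gt0 -expr2 -leNgt sqr_ge0.
exact: (@derivable_nonvanishing_mul_gt0 J h convJ dh h0 x y Jx Jy).
Qed.

Lemma derivable1_continuous {h x} : derivable h x 1 -> {for x, continuous h}.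
Proof. by move=> /derivable1_diffP /differentiable_continuous. Qed.

(* Where [H] does not vanish, [h] vanishes identically nearby, so [h'] is 0. *)
Lemma derive1_eq0_of_mul_sqr_eq0 {A} {H h : R -> R} {x} : open A -> A x ->
  {for x, continuous H} -> H x != 0 -> (forall s, A s -> H s * h s ^+ 2 = 0) ->
  derive1 h x = 0.
Proof.
move=> oA Ax cH Hx0 Hh0; apply: (@derive1_near_cst _ _ 0).
apply: filterS2 (oA x Ax) (cvgr_neq0 _ cH Hx0) => s As Hs0.
by move: (Hh0 s As) => /eqP; rewrite mulf_eq0 (negPf Hs0) /= sqrf_eq0 => /eqP.
Qed.

End RealFunctions.

Section InnerProduct.
Context {R : realType}.
Implicit Types x y w : 'rV[R]_4.

Lemma dot4C x y : dot4 x y = dot4 y x.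
Proof. by apply: eq_bigr => i _; rewrite mulrC. Qed.

Lemma dot4DL x y w : dot4 (x + y) w = dot4 x w + dot4 y w.
Proof. by rewrite /dot4 -big_split; apply: eq_bigr => i _; rewrite mxE mulrDl. Qed.

Lemma dot4ZL (a : R) x w : dot4 (a *: x) w = a * dot4 x w.
Proof. by rewrite /dot4 mulr_sumr; apply: eq_bigr => i _; rewrite mxE mulrA. Qed.

Lemma dot4NL x w : dot4 (- x) w = - dot4 x w.
Proof. by rewrite -scaleN1r dot4ZL mulN1r. Qed.

Lemma dot4DR x y w : dot4 w (x + y) = dot4 w x + dot4 w y.
Proof. by rewrite dot4C dot4DL !(dot4C w). Qed.

Lemma dot4ZR (a : R) x w : dot4 w (a *: x) = a * dot4 w x.
Proof. by rewrite dot4C dot4ZL dot4C. Qed.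

Lemma dot4_ebasis3 x : dot4 x (ebasis R 3) = x 0 3.
Proof.
rewrite /dot4 (bigD1 (3 : 'I_4)) //= big1 ?addr0; first by rewrite mxE eqxx mulr1.
by move=> i i3; rewrite mxE eqxx (negPf i3) mulr0.
Qed.

(* Four orthonormal rows form an orthogonal matrix [P], and [P^T P = 1] is the
   coordinate expansion. *)
Lemma dot4_orthonormal_expansion (b0 b1 b2 b3 : 'rV[R]_4) :
  dot4 b0 b0 = 1 -> dot4 b1 b1 = 1 -> dot4 b2 b2 = 1 -> dot4 b3 b3 = 1 ->
  dot4 b0 b1 = 0 -> dot4 b0 b2 = 0 -> dot4 b0 b3 = 0 ->
  dot4 b1 b2 = 0 -> dot4 b1 b3 = 0 -> dot4 b2 b3 = 0 ->
  forall x y, dot4 x y = dot4 x b0 * dot4 y b0 + dot4 x b1 * dot4 y b1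
     + dot4 x b2 * dot4 y b2 + dot4 x b3 * dot4 y b3.
Proof.
move=> h00 h11 h22 h33 h01 h02 h03 h12 h13 h23 x y.
pose b := nth 0 [:: b0; b1; b2; b3].
pose P : 'M[R]_4 := \matrix_(i < 4, j < 4) b i 0 j.
have dotP (u : 'rV[R]_4) k : (u *m P^T) 0 k = dot4 u (b k).
  by rewrite mxE; apply: eq_bigr => j _; rewrite !mxE.
have PPT : P *m P^T = 1%:M.
  apply/matrixP => i k; rewrite !mxE.
  rewrite (eq_bigr (fun j => b i 0 j * b k 0 j)); last by move=> j _; rewrite !mxE.
  case: i => [[|[|[|[|i]]]] Hi] //; case: k => [[|[|[|[|k]]]] Hk] //=;
  by rewrite -/(dot4 _ _) ?(dot4C b1 b0) ?(dot4C b2 b0) ?(dot4C b3 b0)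
    ?(dot4C b2 b1) ?(dot4C b3 b1) ?(dot4C b3 b2).
have dot_mx (u w : 'rV[R]_4) : dot4 u w = (u *m w^T) 0 0.
  by rewrite mxE; apply: eq_bigr => i _; rewrite mxE.
have dotPT (u : 'rV[R]_4) k : (u *m P^T)^T k 0 = dot4 u (b k).
  by rewrite [LHS]mxE dotP.
rewrite dot_mx -[y^T]mul1mx -(mulmx1C PPT).
have -> : x *m (P^T *m P *m y^T) = (x *m P^T) *m (y *m P^T)^T.
  by rewrite trmx_mul trmxK !mulmxA.
by rewrite mxE !big_ord_recr big_ord0 /= add0r !dotP !dotPT.
Qed.

Lemma derive1_dot4 (p q : R -> 'rV[R]_4) t :
  (forall i, derivable (fun s => p s 0 i) t 1) ->
  (forall i, derivable (fun s => q s 0 i) t 1) ->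
  derive1 (fun s => dot4 (p s) (q s)) t = dot4 (vder p t) (q t) + dot4 (p t) (vder q t).
Proof.
move=> dp dq; rewrite /dot4 -big_split /=.
have -> : (fun s => \sum_(i < 4) p s 0 i * q s 0 i) =
   \sum_(i < 4) (fun s => p s 0 i * q s 0 i) by rewrite fct_sumE.
rewrite derive1E derive_sum; last by move=> i; exact: derivableM (dp i) (dq i).
apply: eq_bigr => i _; rewrite (deriveM (dp i) (dq i)) !mxE !derive1E.
by rewrite /GRing.scale /= addrC mulrC [q t 0 i * _]mulrC.
Qed.

Lemma derivable_dot4 (p q : R -> 'rV[R]_4) t :
  (forall i, derivable (fun s => p s 0 i) t 1) ->
  (forall i, derivable (fun s => q s 0 i) t 1) ->
  derivable (fun s => dot4 (p s) (q s)) t 1.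
Proof.
move=> dp dq; rewrite /dot4.
have -> : (fun s => \sum_(i < 4) p s 0 i * q s 0 i) =
   \sum_(i < 4) (fun s => p s 0 i * q s 0 i) by rewrite fct_sumE.
by apply: derivable_sum => i; exact: derivableM (dp i) (dq i).
Qed.

End InnerProduct.

Section Meridian.
Context {R : realType} {I J : set R} {f g : R -> R} {l n : R -> 'rV[R]_4}.
Context {kappa : R -> R} {n1 n2 : R -> R -> 'rV[R]_4}.
Hypotheses (oI : open I) (oJ : open J).
Hypotheses (hf : smooth_on I f) (hg : smooth_on I g) (hl : vsmooth_on J l).
Hypotheses (hfg : forall u, I u -> derive1 f u ^+ 2 + derive1 g u ^+ 2 = 1)
  (hf0 : forall u, I u -> f u != 0).
Hypotheses (hl3 : forall v, J v -> l v 0 3 = 0)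
  (hl1 : forall v, J v -> dot4 (l v) (l v) = 1)
  (hlt : forall v, J v -> dot4 (vder l v) (vder l v) = 1).
Hypotheses (hn3 : forall v, J v -> n v 0 3 = 0)
  (hnn : forall v, J v -> dot4 (n v) (n v) = 1)
  (hnt : forall v, J v -> dot4 (n v) (vder l v) = 0)
  (hnl : forall v, J v -> dot4 (n v) (l v) = 0)
  (ht' : forall v, J v -> vder (vder l) v = kappa v *: n v - l v)
  (hnd : forall v, J v -> forall i : 'I_4, derivable (fun s => n s 0 i) v 1).
Hypothesis hframe : forall u v, I u -> J v ->
  oriented_normal_frame (meridian_surface f g l) n1 n2 u v.

Let z := meridian_surface f g l.
Let e := ebasis R 3.

Let dl v i : J v -> derivable (fun s => l s 0 i) v 1 := fun Jv => hl i 0%N v Jv.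

Let dt v i : J v -> derivable (fun s => vder l s 0 i) v 1.
Proof.
move=> Jv; have -> : (fun s => vder l s 0 i) = derive1 (fun s => l s 0 i).
  by apply/funext => s; rewrite mxE.
exact: hl i 1%N v Jv.
Qed.

Lemma curve_dot_tangent v : J v -> dot4 (l v) (vder l v) = 0.
Proof.
move=> Jv; have dlv i := dl v i Jv.
have /eqP : 2 * dot4 (l v) (vder l v) = 0.
  by rewrite mulr2n mulrDl !mul1r -{1}dot4C -derive1_dot4 // (derive1_cst_on oJ Jv hl1).
by rewrite mulf_eq0 pnatr_eq0 => /eqP.
Qed.

Lemma tangent_dot_e4 v : J v -> dot4 (vder l v) e = 0.
Proof. by move=> Jv; rewrite dot4_ebasis3 mxE (derive1_cst_on oJ Jv hl3). Qed.

Lemma spherical_frame_expansion {v} : J v -> forall x y, dot4 x y =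
  dot4 x (l v) * dot4 y (l v) + dot4 x (vder l v) * dot4 y (vder l v)
  + dot4 x (n v) * dot4 y (n v) + dot4 x e * dot4 y e.
Proof.
move=> Jv; apply: dot4_orthonormal_expansion; rewrite ?hl1 ?hlt ?hnn //.
- by rewrite dot4_ebasis3 mxE eqxx.
- exact: curve_dot_tangent.
- by rewrite dot4C hnl.
- by rewrite dot4_ebasis3 hl3.
- by rewrite dot4C hnt.
- exact: tangent_dot_e4.
- by rewrite dot4_ebasis3 hn3.
Qed.

Lemma spherical_curvatureE v : J v -> kappa v = dot4 (vder (vder l) v) (n v).
Proof.
by move=> Jv; rewrite ht' // dot4DL dot4ZL dot4NL hnn // dot4C hnl // mulr1 subr0.
Qed.

Lemma derivable_spherical_curvature_dot v :
  J v -> derivable (fun s => dot4 (vder (vder l) s) (n s)) v 1.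
Proof.
move=> Jv; apply: derivable_dot4 => i; last exact: hnd.
have -> : (fun s => vder (vder l) s 0 i) = derive1 (derive1 (fun s => l s 0 i)).
  by apply/funext => s; rewrite mxE; congr derive1; apply/funext => s'; rewrite mxE.
exact: (hl i 2%N v Jv).
Qed.

Lemma meridian_pu u v : I u -> pu z u v = derive1 f u *: l v + derive1 g u *: e.
Proof.
move=> Iu; apply/rowP => i; rewrite /pu /vder mxE.
have -> : (fun s => z s v 0 i) = (fun s => f s * l v 0 i + g s * e 0 i).
  by apply/funext => s; rewrite !mxE.
by rewrite derive1_lincomb ?mxE //; [exact: hf 0%N u Iu | exact: hg 0%N u Iu].
Qed.

Lemma meridian_pv u v : J v -> pv z u v = f u *: vder l v.
Proof.
move=> Jv; apply/rowP => i; rewrite /pv /vder mxE.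
have -> : (fun s => z u s 0 i) = (fun s => f u * l s 0 i + g u * e 0 i).
  by apply/funext => s; rewrite !mxE.
by rewrite derive1_affine ?mxE //; exact: dl.
Qed.

Lemma meridian_puu u v : I u ->
  pu (pu z) u v = derive1 (derive1 f) u *: l v + derive1 (derive1 g) u *: e.
Proof.
move=> Iu; apply/rowP => i; rewrite /pu [vder (fun s => vder _ _) u]/vder !mxE.
rewrite (@derive1_near_eq _ _ (fun s => derive1 f s * l v 0 i + derive1 g s * e 0 i)).
  by rewrite derive1_lincomb ?mxE //; [exact: hf 1%N u Iu | exact: hg 1%N u Iu].
by apply: filterS (oI u Iu) => s Is; rewrite -/(pu z s v) meridian_pu ?mxE.
Qed.

Lemma meridian_puv u v : I u -> J v -> pv (pu z) u v = derive1 f u *: vder l v.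
Proof.
move=> Iu Jv; apply/rowP => i; rewrite /pv [vder (fun s => pu z u s) v]/vder !mxE.
have -> : (fun s => pu z u s 0 i) =
    (fun s => derive1 f u * l s 0 i + derive1 g u * e 0 i).
  by apply/funext => s; rewrite meridian_pu ?mxE.
by rewrite derive1_affine //; exact: dl.
Qed.

Lemma meridian_pvv u v : J v -> pv (pv z) u v = f u *: vder (vder l) v.
Proof.
move=> Jv; apply/rowP => i; rewrite /pv [vder (fun s => vder _ _) v]/vder !mxE.
rewrite (@derive1_near_eq _ _ (fun s => f u * vder l s 0 i + 0)).
  by rewrite derive1_affine ?mxE //; exact: dt.
by apply: filterS (oJ v Jv) => s Js; rewrite -/(pv z u s) meridian_pv ?mxE ?addr0.
Qed.

Lemma meridian_first_fundamental_form {u v} : I u -> J v ->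
  [/\ dot4 (pu z u v) (pu z u v) = 1, dot4 (pu z u v) (pv z u v) = 0
     & dot4 (pv z u v) (pv z u v) = f u ^+ 2].
Proof.
move=> Iu Jv; have le : dot4 (l v) e = 0 by rewrite dot4_ebasis3 hl3.
have ee : dot4 e e = 1 by rewrite dot4_ebasis3 mxE eqxx.
rewrite meridian_pu // meridian_pv //; split.
- rewrite !dot4DL !dot4ZL !dot4DR !dot4ZR hl1 // le (dot4C e) le ee -[RHS](hfg u Iu); ring.
- by rewrite !dot4DL !dot4ZL !dot4ZR curve_dot_tangent // dot4C tangent_dot_e4 //; ring.
- by rewrite dot4ZL !dot4ZR hlt // mulr1 expr2.
Qed.

Lemma normal_dot_tangent {u v N} : I u -> J v ->
  dot4 N (pv z u v) = 0 -> dot4 N (vder l v) = 0.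
Proof.
move=> Iu Jv; rewrite meridian_pv // dot4ZR => /eqP.
by rewrite mulf_eq0 (negPf (hf0 u Iu)) /= => /eqP.
Qed.

Lemma meridian_sigma_uv_normal {u v N} : I u -> J v ->
  dot4 N (pv z u v) = 0 -> dot4 (pv (pu z) u v) N = 0.
Proof.
by move=> Iu Jv /(normal_dot_tangent Iu Jv) tN; rewrite meridian_puv // dot4ZL dot4C tN mulr0.
Qed.

Lemma normal_dot_meridian_pu {u v N} : I u -> dot4 N (pu z u v) = 0 ->
  derive1 f u * dot4 (l v) N + derive1 g u * dot4 e N = 0.
Proof. by move=> Iu; rewrite meridian_pu // dot4DR !dot4ZR !(dot4C N). Qed.

Lemma normal_dot_expansion {u v N M} : I u -> J v ->
  dot4 N (pv z u v) = 0 -> dot4 M (pv z u v) = 0 ->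
  dot4 N M = dot4 (l v) N * dot4 (l v) M + dot4 e N * dot4 e M
             + dot4 (n v) N * dot4 (n v) M.
Proof.
move=> Iu Jv /(normal_dot_tangent Iu Jv) tN /(normal_dot_tangent Iu Jv) tM.
rewrite (spherical_frame_expansion Jv N M) tN mul0r addr0 !(dot4C N) !(dot4C M).
by rewrite addrAC.
Qed.

Lemma meridian_normal_coeff_det {u v} : I u -> J v ->
  (dot4 (pu (pu z) u v) (n1 u v) * dot4 (pv (pv z) u v) (n2 u v)
   - dot4 (pv (pv z) u v) (n1 u v) * dot4 (pu (pu z) u v) (n2 u v)) ^+ 2
  = f u ^+ 2 * (kappa_m f g u ^+ 2 * kappa v ^+ 2).
Proof.
move=> Iu Jv; have [h11 [h22 [h12 [h1u [h1v [h2u [h2v _]]]]]]] := hframe u v Iu Jv.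
rewrite meridian_puu // meridian_pvv // ht' // !dot4ZL !dot4DL !dot4ZL !dot4NL.
rewrite (meridian_normal_det_sqr (hfg u Iu) (normal_dot_meridian_pu Iu h1u)
  (normal_dot_meridian_pu Iu h2u)).
- by rewrite /kappa_m -mulrA (mulrC (kappa v ^+ 2)).
- by rewrite -h11 (normal_dot_expansion Iu Jv h1v h1v).
- by rewrite -h22 (normal_dot_expansion Iu Jv h2v h2v).
- by rewrite -h12 (normal_dot_expansion Iu Jv h1v h2v).
Qed.

Lemma k_inv_meridian u v : I u -> J v ->
  k_inv z n1 n2 u v = - (kappa_m f g u ^+ 2 * kappa v ^+ 2) / f u ^+ 2.
Proof.
move=> Iu Jv; have [_ [_ [_ [_ [h1v [_ [h2v _]]]]]]] := hframe u v Iu Jv.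
have [E F G] := meridian_first_fundamental_form Iu Jv.
move: E F G (meridian_sigma_uv_normal Iu Jv h1v) (meridian_sigma_uv_normal Iu Jv h2v).
move: (meridian_normal_coeff_det Iu Jv); rewrite /k_inv; cbv zeta.
(* Abstract the inner products first: rewriting them in place makes matching
   unfold the derivatives inside [pu] and [pv]. *)
generalize (dot4 (pu z u v) (pu z u v)) (dot4 (pu z u v) (pv z u v))
  (dot4 (pv z u v) (pv z u v)) (dot4 (pv (pu z) u v) (n1 u v))
  (dot4 (pv (pu z) u v) (n2 u v)) (dot4 (pu (pu z) u v) (n1 u v))
  (dot4 (pu (pu z) u v) (n2 u v)) (dot4 (pv (pv z) u v) (n1 u v))
  (dot4 (pv (pv z) u v) (n2 u v)).
move=> E F G c121 c122 c111 c112 c221 c222 det -> -> -> -> ->.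
have W2 : Num.sqrt (1 * f u ^+ 2 - 0 ^+ 2) ^+ 2 = f u ^+ 2.
  by rewrite mul1r expr0n /= subr0 sqr_sqrtr // sqr_ge0.
rewrite !(mulr0, mul0r, subrr) sub0r exprMn expr_div_n expr1n W2 det.
rewrite mul1r expr0n /= subr0.
by field; rewrite hf0.
Qed.

Lemma spherical_curvature_eq_of_sqr_eq v1 v2 :
  (forall x y w, J x -> J w -> x <= y -> y <= w -> J y) ->
  (forall v, J v -> kappa v != 0) ->
  J v1 -> J v2 -> kappa v1 ^+ 2 = kappa v2 ^+ 2 -> kappa v1 = kappa v2.
Proof.
move=> convJ kap0 Jv1 Jv2; rewrite !spherical_curvatureE //.
have K0 s : J s -> dot4 (vder (vder l) s) (n s) != 0.
  by move=> Js; rewrite -spherical_curvatureE // kap0.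
exact: derivable_nonvanishing_eq_of_sqr_eq convJ derivable_spherical_curvature_dot K0 Jv1 Jv2.
Qed.

End Meridian.

Section MeridianCurve.
Context {R : realType} {I : set R} {f g : R -> R}.
Hypotheses (oI : open I) (hf : smooth_on I f) (hg : smooth_on I g)
  (hfg : forall u, I u -> derive1 f u ^+ 2 + derive1 g u ^+ 2 = 1).

Let df' u : I u -> derivable (derive1 f) u 1 := hf 1%N u.
Let dg' u : I u -> derivable (derive1 g) u 1 := hg 1%N u.

Lemma one_sub_derive1_sqr u : I u -> 1 - derive1 f u ^+ 2 = derive1 g u ^+ 2.
Proof. by move=> Iu; rewrite -(hfg u Iu) addrAC subrr add0r. Qed.

Lemma meridian_velocity_dot_accel u : I u ->
  derive1 f u * derive1 (derive1 f) u + derive1 g u * derive1 (derive1 g) u = 0.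
Proof.
move=> Iu; have /eqP : 2 * (derive1 f u * derive1 (derive1 f) u
                            + derive1 g u * derive1 (derive1 g) u) = 0.
  by rewrite -(derive1_sqr_sum (df' u Iu) (dg' u Iu)) (derive1_cst_on oI Iu hfg).
by rewrite mulf_eq0 pnatr_eq0 => /eqP.
Qed.

Lemma meridian_derive2_sqr u : I u ->
  derive1 (derive1 f) u ^+ 2 = kappa_m f g u ^+ 2 * (1 - derive1 f u ^+ 2).
Proof.
move=> Iu; have km := curvature_mul_velocity (hfg u Iu) (meridian_velocity_dot_accel u Iu).
by rewrite one_sub_derive1_sqr // -exprMn /kappa_m km sqrrN.
Qed.

Lemma meridian_ode_of_kappa_m_sqr c u : I u ->
  kappa_m f g u ^+ 2 = c ^+ 2 * f u ^+ 2 ->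
  derive1 (derive1 f) u = - c * f u * Num.sqrt (1 - derive1 f u ^+ 2) \/
  derive1 (derive1 f) u = c * f u * Num.sqrt (1 - derive1 f u ^+ 2).
Proof.
move=> Iu km2.
have /eqP : derive1 (derive1 f) u ^+ 2 = (c * f u * Num.sqrt (1 - derive1 f u ^+ 2)) ^+ 2.
  rewrite meridian_derive2_sqr // km2 !exprMn sqr_sqrtr //.
  by rewrite one_sub_derive1_sqr // sqr_ge0.
by rewrite eqf_sqr => /orP[/eqP|/eqP] ->; [right | left; rewrite !mulNr].
Qed.

Lemma kappa_m_sqr_of_meridian_ode c :
  (forall u, I u -> kappa_m f g u != 0) ->
  (forall u, I u ->
     derive1 (derive1 f) u = - c * f u * Num.sqrt (1 - derive1 f u ^+ 2) \/
     derive1 (derive1 f) u = c * f u * Num.sqrt (1 - derive1 f u ^+ 2)) ->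
  forall u, I u -> kappa_m f g u ^+ 2 = c ^+ 2 * f u ^+ 2.
Proof.
move=> km0 ode u Iu.
pose H s := kappa_m f g s ^+ 2 - c ^+ 2 * f s ^+ 2.
suff : H u == 0 by rewrite /H subr_eq0 => /eqP.
apply/negPn/negP => Hu0.
have HgH s : I s -> H s * derive1 g s ^+ 2 = 0.
  move=> Is; rewrite -one_sub_derive1_sqr // /H mulrBl -meridian_derive2_sqr //.
  have [->|->] := ode s Is;
    by rewrite ?mulNr ?sqrrN !exprMn sqr_sqrtr ?subrr // one_sub_derive1_sqr // sqr_ge0.
have dkm : derivable (kappa_m f g) u 1 :=
  derivableB (derivableM (df' u Iu) (hg 2%N u Iu)) (derivableM (dg' u Iu) (hf 2%N u Iu)).
have dk2 : derivable (fun s => kappa_m f g s ^+ 2) u 1 := @derivableX _ _ _ 2 _ _ dkm.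
have df2 : derivable (fun s => c ^+ 2 * f s ^+ 2) u 1 :=
  derivableM (derivable_cst (c ^+ 2) u 1) (@derivableX _ _ _ 2 _ _ (hf 0%N u Iu)).
have dH : derivable H u 1 := derivableB dk2 df2.
have g2 : derive1 (derive1 g) u = 0 :=
  derive1_eq0_of_mul_sqr_eq0 oI Iu (derivable1_continuous dH) Hu0 HgH.
have g1 : derive1 g u = 0.
  by move: (HgH u Iu) => /eqP; rewrite mulf_eq0 (negPf Hu0) /= sqrf_eq0 => /eqP.
by move: (km0 u Iu); rewrite /kappa_m g1 g2 mulr0 mul0r subrr eqxx.
Qed.

End MeridianCurve.

Theorem proposition5p3 (R : realType) (I J : set R) (f g : R -> R)
  (l n : R -> 'rV[R]_4) (kappa : R -> R) (a : R)
  (hI : open_interval I) (hf : smooth_on I f) (hg : smooth_on I g)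
  (hfg : forall u, I u -> derive1 f u ^+ 2 + derive1 g u ^+ 2 = 1)
  (hf0 : forall u, I u -> f u != 0)
  (hJ : open_interval J) (hl : vsmooth_on J l)
  (hl3 : forall v, J v -> l v 0 3 = 0)
  (hl1 : forall v, J v -> dot4 (l v) (l v) = 1)
  (hlt : forall v, J v -> dot4 (vder l v) (vder l v) = 1)
  (hn3 : forall v, J v -> n v 0 3 = 0)
  (hnn : forall v, J v -> dot4 (n v) (n v) = 1)
  (hnt : forall v, J v -> dot4 (n v) (vder l v) = 0)
  (hnl : forall v, J v -> dot4 (n v) (l v) = 0)
  (ht' : forall v, J v -> vder (vder l) v = kappa v *: n v - l v)
  (hn' : forall v, J v -> vder n v = - (kappa v *: vder l v))
  (hnd : forall v, J v -> forall i : 'I_4, derivable (fun s => n s 0 i) v 1)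
  (hgen : forall u v, I u -> J v -> kappa_m f g u * kappa v != 0)
  (ha : a != 0)
  (n1 n2 : R -> R -> 'rV[R]_4)
  (hframe : forall u v, I u -> J v ->
     oriented_normal_frame (meridian_surface f g l) n1 n2 u v) :
  (forall u v, I u -> J v ->
     k_inv (meridian_surface f g l) n1 n2 u v = - a ^+ 2)
  <->
  (exists b : R, b != 0 /\ (forall v, J v -> kappa v = b) /\
     (forall u, I u ->
        derive1 (derive1 f) u = - (a / b) * f u * Num.sqrt (1 - derive1 f u ^+ 2) \/
        derive1 (derive1 f) u = (a / b) * f u * Num.sqrt (1 - derive1 f u ^+ 2))).
Proof.
have [[u0 Iu0] [oI _]] := hI; have [[v0 Jv0] [oJ convJ]] := hJ.
have kv u v : I u -> J v -> k_inv (meridian_surface f g l) n1 n2 u v =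
    - (kappa_m f g u ^+ 2 * kappa v ^+ 2) / f u ^+ 2 :=
  k_inv_meridian oI oJ hf hg hl hfg hf0 hl3 hl1 hlt hn3 hnn hnt hnl ht' hframe u v.
have kappa0 v : J v -> kappa v != 0.
  by move=> Jv; have := hgen u0 v Iu0 Jv; rewrite mulf_eq0 negb_or => /andP[].
have km0 u : I u -> kappa_m f g u != 0.
  by move=> Iu; have := hgen u v0 Iu Jv0; rewrite mulf_eq0 negb_or => /andP[].
split => [hk | [b [b0 [hkb hode]]]].
  have keq u v : I u -> J v -> kappa_m f g u ^+ 2 * kappa v ^+ 2 = a ^+ 2 * f u ^+ 2.
    move=> Iu Jv; have := hk u v Iu Jv; rewrite kv // mulNr => /oppr_inj.
    by move/(congr1 ( *%R^~ (f u ^+ 2))); rewrite divfK // sqrf_eq0 hf0.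
  exists (kappa v0); split; first exact: kappa0.
  split => [v Jv | u Iu].
    apply: (spherical_curvature_eq_of_sqr_eq hl hnn hnl ht' hnd) => //.
    by apply: (mulfI (expf_neq0 2 (km0 u0 Iu0))); rewrite !keq.
  apply: (meridian_ode_of_kappa_m_sqr oI hf hg hfg) => //.
  apply: (mulIf (expf_neq0 2 (kappa0 v0 Jv0))); rewrite keq // expr_div_n.
  by field; rewrite kappa0.
move=> u v Iu Jv; rewrite kv // hkb // (kappa_m_sqr_of_meridian_ode oI hf hg hfg _ km0 hode) //.
by rewrite expr_div_n; field; rewrite b0 hf0.
Qed.
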